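(* Let $P$ be an EVM program, $(\mathcal{X}_{pc})_{pc}$ the least solution of its addresses equation system, and $G=\langle V,E\rangle$ its stack-sensitive control flow graph. Then for every execution trace $t\equiv S_0\Rightarrow\dots\Rightarrow S_m$ of $P$ from $S_0=\langle 0,\langle 0,\sigma_\emptyset\rangle\rangle$, if $B^{(0)},B^{(1)},\dots,B^{(k)}$ is the sequence of blocks executed by $t$, there is a directed walk $v_0\to v_1\to\dots\to v_k$ in $G$ with $v_0=(B^{(0)},\langle 0,\sigma_\emptyset\rangle)$ such that each $v_\ell$ is a replica of $B^{(\ell)}$, i.e. $v_\ell=(B^{(\ell)},s_\ell)$ for some stack state $s_\ell$.
   Context: EVM programs. An EVM program $P\equiv b_0,\dots,b_p$ is a finite sequence of instructions, each located at a program counter (byte offset); $b_{pc}$ is the instruction at $pc$, $size(b)$ its number of bytes, so the next instruction is at $pc+size(b_{pc})$. Let $Jump=\{\texttt{JUMP},\texttt{JUMPI}\}$, $End=\{\texttt{REVERT},\texttt{STOP},\texttt{INVALID}\}$, $\mathcal{J}(P)=\{pc\mid b_{pc}\equiv\texttt{JUMPDEST}\}$. Other instructions $b^{\delta,\alpha}$ remove $\delta$ and then add $\alpha$ stack items. Blocks. $blocks(P)$ is the set of maximal segments $B_i\equiv b_i,\dots,b_j$ of consecutive instructions such that no instruction strictly between $b_i$ and $b_j$ is in $Jump\cup End\cup\{\texttt{JUMPDEST}\}$; $b_i$ is the first instruction of $P$, or $b_i\equiv\texttt{JUMPDEST}$, or the instruction preceding $b_i$ is $\texttt{JUMPI}$;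 and $b_j$ is the last instruction of $P$, or $b_j\in Jump\cup End$, or the instruction following $b_j$ is $\texttt{JUMPDEST}$. A block is identified by the program counter $i$ of its first instruction. The sequence of blocks executed by a trace $t$ is obtained by listing, in order, the block $B_{pc}$ for each state $\langle pc,\_\rangle$ of $t$ whose $pc$ is the first instruction of a block. Stack states: pairs $\langle n,\sigma\rangle$, $n\ge0$ the stack size (positions $s_0,\dots,s_{n-1}$, top $s_{n-1}$), $\sigma$ a partial map from positions to finite sets of jump destinations; $\sigma_\emptyset$ the empty map; $m[x\mapsto y]$ update; $m\backslash[x_1,\dots,x_k]$ removal from domain. Semantics. States $\langle pc,\langle n,\sigma\rangle\rangle$; transitions: $b_{pc}=\texttt{JUMP}$: $\Rightarrow\langle v,\langle n-1,\sigma\backslash[s_{n-1}]\rangle\rangle$ with $\sigma(s_{n-1})=\{v\}$; $b_{pc}=\texttt{JUMPI}$: $\Rightarrow\langle v,\langle n-2,\sigma\backslash[s_{n-1},s_{n-2}]\rangle\rangle$ with $\sigma(s_{n-1})=\{v\}$, or $\Rightarrow\langle pc+size(b_{pc}),\langle n-2,\sigma\backslash[s_{n-1},s_{n-2}]\rangle\rangle$; for $b_{pc}\notin Jump\cup End$: $\Rightarrow\langle pc+size(b_{pc}),\lambda(b_{pc},\langle n,\sigma\rangle)\rangle$; no transition from $End$. Update function $\lambda$: $\lambda(\texttt{JUMP},\langle n,\sigma\rangle)=\langle n-1,\sigma\backslash[s_{n-1}]\rangle$; $\lambda(\texttt{JUMPI},\langle n,\sigma\rangle)=\langle n-2,\sigma\backslash[s_{n-1},s_{n-2}]\rangle$;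 $\lambda(\texttt{PUSH}x\ v,\langle n,\sigma\rangle)=\langle n+1,\sigma[s_n\mapsto\{v\}]\rangle$ if $v\in\mathcal{J}(P)$, else $\langle n+1,\sigma\rangle$; $\lambda(\texttt{DUP}x,\langle n,\sigma\rangle)=\langle n+1,\sigma[s_n\mapsto\sigma(s_{n-x})]\rangle$ if $s_{n-x}\in dom(\sigma)$, else $\langle n+1,\sigma\rangle$; $\lambda(\texttt{SWAP}x,\langle n,\sigma\rangle)=\langle n,\sigma'\rangle$ with the contents (defined or undefined) of $s_{n-1}$ and $s_{n-x-1}$ exchanged; other $b^{\delta,\alpha}\notin End$: $\lambda(b,\langle n,\sigma\rangle)=\langle n-\delta+\alpha,\sigma\backslash[s_{n-1},\dots,s_{n-\delta}]\rangle$. Abstract states: partial maps from stack states to sets of stack states, ordered by domain inclusion and pointwise inclusion; bottom the empty map. $\tau(b,\pi)(s)=\{\lambda(b,t)\mid t\in\pi(s)\}$ on $dom(\pi)$; $idmap(t)$ maps $t$ to $\{t\}$ only. Addresses equation system: variables $\mathcal{X}_{pc}$ with constraints $\mathcal{X}_0\sqsupseteq idmap(\langle0,\sigma_\emptyset\rangle)$; if $b_{pc}=\texttt{JUMP}$: $\mathcal{X}_v\sqsupseteq idmap(\lambda(b_{pc},\langle n,\sigma\rangle))$ for all $s\in dom(\mathcal{X}_{pc})$, $\langle n,\sigma\rangle\in\mathcal{X}_{pc}(s)$, $v\in\sigma(s_{n-1})$; if $b_{pc}=\texttt{JUMPI}$: the same plus $\mathcal{X}_{pc+1}\sqsupseteq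 idmap(\lambda(b_{pc},\langle n,\sigma\rangle))$; if $b_{pc}\notin End\cup Jump$ and $b_{pc+size(b_{pc})}=\texttt{JUMPDEST}$: $\mathcal{X}_{pc+size(b_{pc})}\sqsupseteq idmap(\lambda(b_{pc},\langle n,\sigma\rangle))$ for all such $s,\langle n,\sigma\rangle$; otherwise if $b_{pc}\notin End\cup Jump$: $\mathcal{X}_{pc+size(b_{pc})}\sqsupseteq\tau(b_{pc},\mathcal{X}_{pc})$. Take the least solution. Stack-sensitive CFG $G=\langle V,E\rangle$: $V=\{(B_i,s)\mid B_i\in blocks(P),\ s\in dom(\mathcal{X}_i)\}$ (replicas of block $B_i$, one per entry stack state). For each block $B_i\equiv b_i,\dots,b_j$, each $s\in dom(\mathcal{X}_j)$ and each $\langle n',\sigma'\rangle\in\mathcal{X}_j(s)$, with $\langle n'',\sigma''\rangle=\lambda(b_j,\langle n',\sigma'\rangle)$: if $b_j\in Jump$, there is an edge $(B_i,s)\to(B_d,\langle n'',\sigma''\rangle)$ for every $d\in\sigma'(s_{n'-1})$; if $b_j\neq\texttt{JUMP}$ and $b_j\notin End$, there is an edge $(B_i,s)\to(B_d,\langle n'',\sigma''\rangle)$ with $d=j+size(b_j)$. $E$ is the set of all these edges. *)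

From mathcomp Require Import all_boot finmap.
Set Implicit Arguments.
Unset Strict Implicit.
Unset Printing Implicit Defensive.
Local Open Scope fset_scope.
Local Open Scope nat_scope.

(* Instructions.  [OTHER delta alpha] is any other instruction b^{delta,alpha}. *)
Inductive instr :=
| JUMP | JUMPI | JUMPDEST | REVERT | STOP | INVALID
| PUSH (x v : nat)
| DUP (x : nat)
| SWAP (x : nat)
| OTHER (delta alpha : nat).

Definition isize (b : instr) : nat :=
  match b with PUSH x _ => x.+1 | _ => 1 end.

Definition is_jump (b : instr) : bool :=
  match b with JUMP | JUMPI => true | _ => false end.
Definition is_end (b : instr) : bool :=
  match b with REVERT | STOP | INVALID => true | _ => false end.
Definition is_jumpdest (b : instr) : bool :=
  match b with JUMPDEST => true | _ => false end.
Definition is_JUMPI (b : instr) : bool :=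
  match b with JUMPI => true | _ => false end.

(* An EVM program: a finite sequence of instructions b_0, ..., b_p laid out
   at consecutive byte offsets starting at 0. *)
Definition program := seq instr.

Fixpoint instr_at_from (P : program) (off pc : nat) : option instr :=
  match P with
  | [::] => None
  | b :: P' => if pc == off then Some b else instr_at_from P' (off + isize b) pc
  end.

Definition instr_at (P : program) (pc : nat) : option instr := instr_at_from P 0 pc.

Definition jdest (P : program) (v : nat) : bool :=
  if instr_at P v is Some b then is_jumpdest b else false.

(* Stack states <n, sigma>: sigma a partial map from positions to finite sets
   of jump destinations (position s_i is the natural number i). *)
Definition stmap := nat -> option {fset nat}.
Definition sstate := (nat * stmap)%type.
Definition sigma0 : stmap := fun _ => None.
Definition init_st : sstate := (0, sigma0).

Definition upd (m : stmap) (x : nat) (y : {fset nat}) : stmap :=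
  fun p => if p == x then Some y else m p.
Definition remv (m : stmap) (xs : seq nat) : stmap :=
  fun p => if p \in xs then None else m p.
Definition swp (m : stmap) (a b : nat) : stmap :=
  fun p => if p == a then m b else if p == b then m a else m p.

(* The update function lambda (End instructions have no update; the value
   given to them below is never used). *)
Definition lam (P : program) (b : instr) (st : sstate) : sstate :=
  let: (n, sg) := st in
  match b with
  | JUMP => (n - 1, remv sg [:: n - 1])
  | JUMPI => (n - 2, remv sg [:: n - 1; n - 2])
  | PUSH _ v => if jdest P v then (n.+1, upd sg n [fset v]) else (n.+1, sg)
  | DUP x => match sg (n - x) with
             | Some D => (n.+1, upd sg n D)
             | None => (n.+1, sg)
             end
  | SWAP x => (n, swp sg (n - 1) (n - x - 1))
  | OTHER d a => (n - d + a, remv sg [seq n - i.+1 | i <- iota 0 d])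
  | JUMPDEST => (n, sg)            (* JUMPDEST is b^{0,0} *)
  | _ => st
  end.

Definition state := (nat * sstate)%type.

Inductive step (P : program) : state -> state -> Prop :=
| step_jump pc n sg v :
    instr_at P pc = Some JUMP -> sg (n - 1) = Some [fset v] ->
    step P (pc, (n, sg)) (v, (n - 1, remv sg [:: n - 1]))
| step_jumpi_taken pc n sg v :
    instr_at P pc = Some JUMPI -> sg (n - 1) = Some [fset v] ->
    step P (pc, (n, sg)) (v, (n - 2, remv sg [:: n - 1; n - 2]))
| step_jumpi_next pc n sg :
    instr_at P pc = Some JUMPI ->
    step P (pc, (n, sg)) (pc + isize JUMPI, (n - 2, remv sg [:: n - 1; n - 2]))
| step_other pc b st :
    instr_at P pc = Some b -> ~~ is_jump b -> ~~ is_end b ->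
    step P (pc, st) (pc + isize b, lam P b st).

Definition trace (P : program) (S : nat -> state) (m : nat) : Prop :=
  S 0 = (0, init_st) /\ forall l, l < m -> step P (S l) (S l.+1).

(* Blocks, identified by the pc of their first instruction. *)
Definition is_block_start (P : program) (i : nat) : bool :=
  isSome (instr_at P i) &&
  [|| i == 0,
      (if instr_at P i is Some b then is_jumpdest b else false)
    | (0 < i) && (if instr_at P i.-1 is Some b then is_JUMPI b else false)].

Definition ends_block (P : program) (j : nat) : bool :=
  match instr_at P j with
  | Some b => [|| is_jump b, is_end b |
                 match instr_at P (j + isize b) with
                 | Some c => is_jumpdest c
                 | None => true        (* b_j is the last instruction of P *)
                 end]
  | None => false
  end.

Definition block (P : program) (i j : nat) : Prop :=
  is_block_start P i /\ i <= j /\ ends_block P j /\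
  forall k, i <= k < j -> isSome (instr_at P k) -> ~~ ends_block P k.

Definition exec_blocks (P : program) (S : nat -> state) (m : nat) : seq nat :=
  [seq (S l).1 | l <- [seq l <- iota 0 m.+1 | is_block_start P (S l).1]].

(* Families of abstract states X_pc : partial maps from stack states to sets
   of stack states; Xdom pc s  <-> s \in dom(X_pc),
   Xval pc s t <-> t \in X_pc(s). *)
Record absfam := AbsFam {
  Xdom : nat -> sstate -> Prop;
  Xval : nat -> sstate -> sstate -> Prop }.

Definition absfam_wf (X : absfam) : Prop :=
  forall pc s t, Xval X pc s t -> Xdom X pc s.

Definition absfam_le (X Y : absfam) : Prop :=
  (forall pc s, Xdom X pc s -> Xdom Y pc s) /\
  (forall pc s t, Xval X pc s t -> Xval Y pc s t).

Definition ge_idmap (X : absfam) (pc : nat) (t : sstate) : Prop :=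
  Xdom X pc t /\ Xval X pc t t.

Definition ge_tau (P : program) (X : absfam) (pc' : nat) (b : instr) (pc : nat) : Prop :=
  (forall s, Xdom X pc s -> Xdom X pc' s) /\
  (forall s t, Xdom X pc s -> Xval X pc s t -> Xval X pc' s (lam P b t)).

Definition next_is_jumpdest (P : program) (pc : nat) (b : instr) : bool :=
  if instr_at P (pc + isize b) is Some c then is_jumpdest c else false.

Definition addr_solution (P : program) (X : absfam) : Prop :=
  ge_idmap X 0 init_st /\
  forall pc b, instr_at P pc = Some b ->
    (is_jump b -> forall s n sg D v, Xdom X pc s -> Xval X pc s (n, sg) ->
        sg (n - 1) = Some D -> v \in D -> ge_idmap X v (lam P b (n, sg))) /\
    (is_JUMPI b -> forall s t, Xdom X pc s -> Xval X pc s t ->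
        ge_idmap X (pc + isize b) (lam P b t)) /\
    (~~ is_jump b -> ~~ is_end b -> next_is_jumpdest P pc b ->
        forall s t, Xdom X pc s -> Xval X pc s t ->
        ge_idmap X (pc + isize b) (lam P b t)) /\
    (~~ is_jump b -> ~~ is_end b -> ~~ next_is_jumpdest P pc b ->
        ge_tau P X (pc + isize b) b pc).

Definition least_addr_solution (P : program) (X : absfam) : Prop :=
  absfam_wf X /\ addr_solution P X /\
  forall Y, absfam_wf Y -> addr_solution P Y -> absfam_le X Y.

Definition vertex := (nat * sstate)%type.

Definition is_vertex (P : program) (X : absfam) (v : vertex) : Prop :=
  (exists j, block P v.1 j) /\ Xdom X v.1 v.2.

Definition is_edge (P : program) (X : absfam) (v w : vertex) : Prop :=
  exists j b n' sg',
    block P v.1 j /\ instr_at P j = Some b /\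
    Xdom X j v.2 /\ Xval X j v.2 (n', sg') /\
    w.2 = lam P b (n', sg') /\
    ((is_jump b /\ exists D, sg' (n' - 1) = Some D /\ w.1 \in D) \/
     (b <> JUMP /\ ~~ is_end b /\ w.1 = j + isize b)).

From mathcomp Require Import all_boot finmap.
From mathcomp Require Import zify.

(* Soundness of the stack-sensitive CFG: every execution trace of an EVM
   program P is mirrored by a walk in the CFG built from a solution X of the
   addresses equation system.

   The proof follows the trace step by step, maintaining the invariant
   [at_block]: the current state lies in the replica u = (B_i, s) of the last
   executed block, and X_pc(s) at the current pc contains the current stack
   state.  A step either stays inside the block, where the equations for
   non-branching instructions propagate the invariant, or leaves it through
   its last instruction along a CFG edge to a block start whose abstract
   state contains the new stack state ([step_in_block]); jump targets are
   block starts because recorded destinations are JUMPDESTs ([dests_valid]). *)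

Set Implicit Arguments.
Unset Strict Implicit.
Unset Printing Implicit Defensive.

Lemma isize_gt0 (b : instr) : 0 < isize b.
Proof. by case: b. Qed.

Lemma instr_at_from_before (P : program) (off pc : nat) :
  pc < off -> instr_at_from P off pc = None.
Proof.
elim: P off => [//|c P IH] off /= Hpc.
have -> : (pc == off) = false by apply/eqP; lia.
by apply: IH; have := isize_gt0 c; lia.
Qed.

Lemma instr_at_from_ge (P : program) (off pc : nat) (b : instr) :
  instr_at_from P off pc = Some b -> off <= pc.
Proof. by case: (leqP off pc) => // /(instr_at_from_before P) ->. Qed.

Lemma instr_at_from_inside (P : program) (off pc k : nat) (b : instr) :
  instr_at_from P off pc = Some b -> pc < k < pc + isize b ->
  instr_at_from P off k = None.
Proof.
elim: P off => [//|c P IH] off /=.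
case: eqP => [-> [<-] Hk | _ Hb Hk].
  have -> : (k == off) = false by apply/eqP; lia.
  by apply: instr_at_from_before; lia.
have Hge := instr_at_from_ge Hb.
have -> : (k == off) = false by apply/eqP; lia.
exact: IH Hb Hk.
Qed.

Lemma instr_at_from_bound (P : program) (off pc : nat) (b : instr) :
  instr_at_from P off pc = Some b -> pc < off + sumn (map isize P).
Proof.
elim: P off => [//|c P IH] off /=.
case: eqP => [-> _ | _ /IH]; last lia.
by have := isize_gt0 c; lia.
Qed.

Lemma instr_before_next (P : program) (pc : nat) (b : instr) :
  instr_at P pc = Some b ->
  instr_at P (pc + isize b).-1 = if isize b == 1 then Some b else None.
Proof.
move=> Hb; case: eqP => [-> | Hsize]; first by rewrite addn1.
by apply: (instr_at_from_inside Hb); have := isize_gt0 b; lia.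
Qed.

Lemma block_start_after (P : program) (pc : nat) (b : instr) :
  instr_at P pc = Some b ->
  is_block_start P (pc + isize b) =
  isSome (instr_at P (pc + isize b)) && (next_is_jumpdest P pc b || is_JUMPI b).
Proof.
move=> Hb; have Hsize := isize_gt0 b.
rewrite /is_block_start /next_is_jumpdest (instr_before_next Hb).
have -> : (pc + isize b == 0) = false by apply/eqP; lia.
have -> : 0 < pc + isize b by lia.
case: (instr_at P (pc + isize b)) => //= c.
by case: eqP => // Hsize1; case: b Hb Hsize Hsize1.
Qed.

Lemma ends_block_next (P : program) (pc : nat) (b : instr) :
  instr_at P pc = Some b -> next_is_jumpdest P pc b || is_jump b ->
  ends_block P pc.
Proof.
rewrite /next_is_jumpdest /ends_block => ->.
case: (instr_at P (pc + isize b)) => [c|] /=; last by rewrite !orbT.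
by case/orP=> ->; rewrite ?orbT.
Qed.

Lemma ends_block_instr (P : program) (j : nat) :
  ends_block P j -> isSome (instr_at P j).
Proof. by rewrite /ends_block; case: (instr_at P j). Qed.

(* Every block start begins a block: it ends at the first instruction from
   there on that may end a block; one exists since the last instruction of
   the program may. *)
Lemma block_exists (P : program) (i : nat) :
  is_block_start P i -> exists j, block P i j.
Proof.
move=> Hstart; have /andP [Hi _] := Hstart.
have [k Hik Hk] : exists2 k, i <= k & ends_block P k.
  pose later_instr k := (i <= k) && isSome (instr_at P k).
  have Hex : exists k, later_instr k by exists i; rewrite /later_instr leqnn.
  have Hub : forall k, later_instr k -> k <= sumn (map isize P).
    move=> k /andP [_]; case Hb: (instr_at P k) => [b|] // _.
    by have := instr_at_from_bound Hb; lia.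
  case: (ex_maxnP Hex Hub) => k /andP [Hik Hk] Hmax.
  exists k => //; move: Hk; rewrite /ends_block.
  case Hb: (instr_at P k) => [b|] // _.
  case Hnext: (instr_at P (k + isize b)) => [c|]; last by rewrite !orbT.
  have Hlater : later_instr (k + isize b) by rewrite /later_instr Hnext andbT; lia.
  by have := Hmax _ Hlater; have := isize_gt0 b; lia.
pose ends_after k := (i <= k) && ends_block P k.
have Hex : exists k, ends_after k by exists k; rewrite /ends_after Hik.
case: (ex_minnP Hex) => j /andP [Hij Hj] Hmin.
exists j; split=> //; split=> //; split=> // k' /andP [Hik' Hk'j] _.
apply/negP => Hk'; have := Hmin k'; rewrite /ends_after Hik' Hk' => /(_ isT).
by lia.
Qed.

Lemma block_end_unique (P : program) (i j pc : nat) :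
  block P i j -> i <= pc <= j -> ends_block P pc -> pc = j.
Proof.
move=> [_ [_ [_ Hinner]]] /andP [Hipc Hpcj] Hend.
case: (ltnP pc j) => [Hlt | Hge]; last lia.
by have := Hinner pc; rewrite Hipc Hlt (ends_block_instr Hend) Hend => /(_ isT isT).
Qed.

Lemma block_next_le (P : program) (i j pc : nat) (b : instr) :
  block P i j -> i <= pc <= j -> instr_at P pc = Some b ->
  ~~ ends_block P pc -> pc + isize b <= j.
Proof.
move=> Hblock Hpc Hb Hnend; have [_ [_ [Hend _]]] := Hblock.
have Hlt : pc < j.
  rewrite ltn_neqAle; case/andP: Hpc => _ ->; rewrite andbT.
  by apply/eqP => Epc; rewrite Epc Hend in Hnend.
case: (leqP (pc + isize b) j) => // Hfar.
have Hnone : instr_at P j = None by apply: (instr_at_from_inside Hb); lia.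
by have := ends_block_instr Hend; rewrite Hnone.
Qed.

Definition dests_valid (P : program) (st : sstate) : Prop :=
  forall p D v, st.2 p = Some D -> v \in D -> jdest P v.

Lemma dests_valid_remv (P : program) (n n' : nat) (sg : stmap) (xs : seq nat) :
  dests_valid P (n, sg) -> dests_valid P (n', remv sg xs).
Proof. by move=> H p D v /=; rewrite /remv; case: ifP => // _; apply: H. Qed.

Lemma dests_valid_lam (P : program) (b : instr) (st : sstate) :
  dests_valid P st -> dests_valid P (lam P b st).
Proof.
case: st => n sg H; case: b => /=; try exact: dests_valid_remv H; try exact: H.
- move=> x v; case: ifP => Hv // p D w /=; rewrite /upd.
  case: eqP => _; last exact: H.
  by move=> [<-]; rewrite inE => /eqP ->.
- move=> x; case E: (sg (n - x)) => [D|] // p D' w /=; rewrite /upd.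
  case: eqP => _; last exact: H.
  by move=> [<-]; apply: H E.
- move=> x p D w /=; rewrite /swp.
  by case: eqP => _; [|case: eqP => _]; apply: H.
- by move=> d a; apply: dests_valid_remv H.
Qed.

Lemma jdest_block_start (P : program) (v : nat) :
  jdest P v -> is_block_start P v.
Proof.
rewrite /jdest /is_block_start; case: (instr_at P v) => // b Hb.
by rewrite /= Hb orbT.
Qed.

Definition entry_vertex : vertex := (0, init_st).

(* The state S lies in the replica u of the block B_{u.1} ending at j: either
   beyond the program, or at a pc of that block whose abstract state from the
   entry stack state u.2 contains the current stack state. *)
Definition at_block (P : program) (X : absfam) (u : vertex) (j : nat)
    (S : state) : Prop :=
  [/\ block P u.1 j, u.1 <= S.1, dests_valid P S.2 &
      instr_at P S.1 = None \/
      [/\ S.1 <= j, Xdom X S.1 u.2 & Xval X S.1 u.2 S.2]].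

Definition stays_in (P : program) (X : absfam) (u : vertex) (j : nat)
    (S : state) : Prop :=
  ~~ is_block_start P S.1 /\ at_block P X u j S.

Definition exits_to (P : program) (X : absfam) (u : vertex) (S : state) : Prop :=
  [/\ is_edge P X u S, is_block_start P S.1, ge_idmap X S.1 S.2 &
      dests_valid P S.2].

Lemma enter_block (P : program) (X : absfam) (w : vertex) :
  is_block_start P w.1 -> ge_idmap X w.1 w.2 -> dests_valid P w.2 ->
  is_vertex P X w /\ exists j, at_block P X w j w.
Proof.
move=> Hstart [Hdom Hval] Hvalid; have [j Hblock] := block_exists Hstart.
split; first by split; first exists j.
exists j; split=> //; right; split=> //.
by case: Hblock => [_ []].
Qed.

Lemma at_block_instr (P : program) (X : absfam) (u : vertex) (j pc : nat)
    (st : sstate) (b : instr) :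
  at_block P X u j (pc, st) -> instr_at P pc = Some b ->
  [/\ u.1 <= pc <= j, Xdom X pc u.2 & Xval X pc u.2 st].
Proof.
move=> [_ Hui _ [/= -> // | [Hpcj Hdom Hval]]] _.
by split=> //; rewrite Hui.
Qed.

(* A taken jump leaves the block along an edge; its target is a block start
   because recorded destinations are JUMPDESTs. *)
Lemma jump_exit (P : program) (X : absfam) (u : vertex) (j pc n : nat)
    (sg : stmap) (b : instr) (v : nat) :
  addr_solution P X -> at_block P X u j (pc, (n, sg)) ->
  instr_at P pc = Some b -> is_jump b -> sg (n - 1) = Some [fset v]%fset ->
  exits_to P X u (v, lam P b (n, sg)).
Proof.
move=> [_ Hsol] Hat Hb Hjump Hsg.
have [Hpc Hdom Hval] := at_block_instr Hat Hb.
have [Hblock _ Hvalid _] := Hat.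
have Hv : v \in [fset v]%fset := fset11 v.
have Hlast : pc = j.
  apply: block_end_unique Hblock Hpc (ends_block_next Hb _).
  by rewrite Hjump orbT.
subst j; split=> /=.
- exists pc, b, n, sg; do 5!split=> //.
  by left; split=> //; exists [fset v]%fset.
- exact: jdest_block_start (Hvalid _ _ _ Hsg Hv).
- exact: (Hsol pc b Hb).1 Hjump _ _ _ _ _ Hdom Hval Hsg Hv.
- exact: dests_valid_lam Hvalid.
Qed.

Lemma fallthrough_step (P : program) (X : absfam) (u : vertex) (j pc : nat)
    (st : sstate) (b : instr) :
  addr_solution P X -> at_block P X u j (pc, st) -> instr_at P pc = Some b ->
  b <> JUMP -> ~~ is_end b ->
  stays_in P X u j (pc + isize b, lam P b st) \/
  exits_to P X u (pc + isize b, lam P b st).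
Proof.
have JUMPI_jump : forall c, is_JUMPI c -> is_jump c by case.
have other_not_jump : forall c, c <> JUMP -> ~~ is_JUMPI c -> ~~ is_jump c by case.
move=> [_ Hsol] Hat Hb HnJUMP Hnend.
have [Hpc Hdom Hval] := at_block_instr Hat Hb.
have [Hblock _ Hvalid _] := Hat.
have [_ [Hjumpi [Hjdest Htau]]] := Hsol pc b Hb.
have Hvalid' := @dests_valid_lam P b st Hvalid.
case Hstart: (is_block_start P (pc + isize b)).
- right; move: (Hstart); rewrite (block_start_after Hb) => /andP [_ Hkind].
  have Hlast : pc = j.
    apply: block_end_unique Hblock Hpc (ends_block_next Hb _).
    by case/orP: Hkind => [-> // | /JUMPI_jump ->]; rewrite orbT.
  have Hentry : ge_idmap X (pc + isize b) (lam P b st).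
    case HJ: (is_JUMPI b); first exact: Hjumpi HJ _ _ Hdom Hval.
    rewrite HJ orbF in Hkind.
    exact: Hjdest (other_not_jump b HnJUMP (negbT HJ)) Hnend Hkind _ _ Hdom Hval.
  subst j; split=> //; case: st Hval {Hat Hvalid Hentry Hvalid'} => n sg Hval.
  by exists pc, b, n, sg; do 5!split=> //; right.
- left; split; first by rewrite Hstart.
  split=> //=; first by case/andP: Hpc => Hui _; have := isize_gt0 b; lia.
  case Hnext: (instr_at P (pc + isize b)) => [c|]; [right | by left].
  move: Hstart; rewrite (block_start_after Hb) Hnext /= => /norP [Hnjd HnJI].
  have Hnj := other_not_jump b HnJUMP HnJI.
  have [Htau_dom Htau_val] := Htau Hnj Hnend Hnjd.
  split; [|exact: Htau_dom | exact: Htau_val].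
  apply: (block_next_le Hblock Hpc Hb).
  rewrite /ends_block Hb Hnext (negbTE Hnj) (negbTE Hnend).
  by move: Hnjd; rewrite /next_is_jumpdest Hnext.
Qed.

Lemma step_in_block (P : program) (X : absfam) (u : vertex) (j : nat)
    (S1 S2 : state) :
  addr_solution P X -> at_block P X u j S1 -> step P S1 S2 ->
  stays_in P X u j S2 \/ exits_to P X u S2.
Proof.
move=> Hsol Hat Hstep.
case: Hstep Hat => [pc n sg v Hb Hsg | pc n sg v Hb Hsg | pc n sg Hb
                  | pc b st Hb Hnj Hnend] Hat.
- by right; exact: (jump_exit Hsol Hat Hb isT Hsg).
- by right; exact: (jump_exit Hsol Hat Hb isT Hsg).
- exact: (fallthrough_step Hsol Hat Hb).
- by apply: (fallthrough_step Hsol Hat Hb) => // EJ; rewrite EJ in Hnj.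
Qed.

Lemma step_instr (P : program) (S1 S2 : state) :
  step P S1 S2 -> isSome (instr_at P S1.1).
Proof. by case=> [? ? ? ? -> | ? ? ? ? -> | ? ? ? -> | ? ? ? ->]. Qed.

Definition walk (T : Type) (x0 : T) (V : T -> Prop) (E : T -> T -> Prop)
    (vs : seq T) : Prop :=
  (forall l, l < size vs -> V (nth x0 vs l)) /\
  (forall l, l.+1 < size vs -> E (nth x0 vs l) (nth x0 vs l.+1)).

Lemma walk1 (T : Type) (x0 : T) (V : T -> Prop) (E : T -> T -> Prop) (x : T) :
  V x -> walk x0 V E [:: x].
Proof. by move=> Hx; split=> [[]|]. Qed.

Lemma walk_rcons (T : Type) (x0 : T) (V : T -> Prop) (E : T -> T -> Prop)
    (x : T) (vs : seq T) (w : T) :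
  walk x0 V E (x :: vs) -> E (last x vs) w -> V w ->
  walk x0 V E (rcons (x :: vs) w).
Proof.
move=> [HV HE] Hlast Hw; rewrite /walk size_rcons.
split=> l; rewrite !nth_rcons /= => Hl.
  case: ifP => [/HV // | /negbT Hge].
  by have -> : l == (size vs).+1 by apply/eqP; lia.
have -> : l < (size vs).+1 by lia.
case: ifP => [/HE // | /negbT Hge].
have -> : l = size vs by lia.
by rewrite eqxx; have := nth_last x0 (x :: vs); rewrite /= => ->.
Qed.

Lemma exec_blocks_S (P : program) (S : nat -> state) (m : nat) :
  exec_blocks P S m.+1 = exec_blocks P S m ++
    (if is_block_start P (S m.+1).1 then [:: (S m.+1).1] else [::]).
Proof.
rewrite /exec_blocks -addn1 iotaD filter_cat map_cat /= add0n.
by case: (is_block_start P (S m.+1).1).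
Qed.

Lemma trace_walk (P : program) (X : absfam) (S : nat -> state) (m : nat) :
  addr_solution P X -> trace P S m -> isSome (instr_at P 0) ->
  forall m', m' <= m -> exists vs j,
    [/\ map fst (entry_vertex :: vs) = exec_blocks P S m',
        walk entry_vertex (is_vertex P X) (is_edge P X) (entry_vertex :: vs) &
        at_block P X (last entry_vertex vs) j (S m')].
Proof.
move=> Hsol [HS0 Hsteps] Hi0; elim=> [_ | m' IH Hm].
  have Hstart : is_block_start P 0 by rewrite /is_block_start Hi0.
  have Hempty : dests_valid P init_st by [].
  have [Hv [j Hat]] := @enter_block P X entry_vertex Hstart Hsol.1 Hempty.
  exists [::], j; rewrite HS0; split=> //; last exact: walk1.
  by rewrite /exec_blocks /= HS0 Hstart /= HS0.
have [vs [j [Hexec Hwalk Hat]]] := IH (ltnW Hm).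
case: (step_in_block Hsol Hat (Hsteps m' Hm))
  => [[Hnstart Hat'] | [Hedge Hstart Hentry Hvalid]].
  by exists vs, j; rewrite exec_blocks_S (negbTE Hnstart) cats0.
have [Hv [j' Hat']] := enter_block Hstart Hentry Hvalid.
exists (rcons vs (S m'.+1)), j'; rewrite last_rcons; split=> //.
- by rewrite -rcons_cons map_rcons Hexec exec_blocks_S Hstart cats1.
- exact: walk_rcons Hwalk Hedge Hv.
Qed.

Unset Implicit Arguments.

Theorem theorem2 (P : program) (X : absfam) (S : nat -> state) (m : nat) :
  least_addr_solution P X -> trace P S m ->
  exists vs : seq vertex,
    map fst vs = exec_blocks P S m /\
    (forall v0 vs', vs = v0 :: vs' -> v0.2 = init_st) /\
    (forall l, l < size vs -> is_vertex P X (nth (0, init_st) vs l)) /\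
    (forall l, l.+1 < size vs ->
       is_edge P X (nth (0, init_st) vs l) (nth (0, init_st) vs l.+1)).
Proof.
move=> [_ [Hsol _]] Htrace.
case Hi0: (instr_at P 0) => [b0|].
  have Hi0' : isSome (instr_at P 0) by rewrite Hi0.
  have [vs [j [Hexec [Hvert Hedge] _]]] := trace_walk Hsol Htrace Hi0' (leqnn m).
  by exists (entry_vertex :: vs); do !split=> //; move=> v0 vs' [<-].
(* An empty program admits no step, so the trace is just S 0. *)
have Hm0 : m = 0.
  case: m Htrace => // m [HS0 Hsteps].
  by have := step_instr (Hsteps 0 isT); rewrite HS0 /= Hi0.
exists [::]; rewrite Hm0 /exec_blocks /=.
by case: Htrace => HS0 _; rewrite HS0 /is_block_start Hi0.
Qed.
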